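(* Let $H_1,\ldots,H_r\in\mathcal S(\mathfrak q)^Q$ be bi-homogeneous polynomials such that, for generic $x\in V^*$, the elements $\varphi_x(H_i)$ with $i\le\operatorname{ind}\mathfrak g_x$ freely generate $\mathcal S(\mathfrak g_x)^{G_x}=\mathcal S(\mathfrak g_x)^{\mathfrak g_x}$, and $H_j\in\mathbb C[V^*]^G$ for $j>\operatorname{ind}\mathfrak g_x$. Suppose also that $\sum_{i=1}^{\operatorname{ind}\mathfrak g_x}\deg_{\mathfrak g}H_i=\mathbf b(\mathfrak g_x)$. Then $\sum_{i=1}^r\deg H_i=\mathbf b(\mathfrak q)$ if and only if $\sum_{i=1}^r\deg_V H_i=\dim V$.
   Context: Setting: $G$ is a connected complex reductive algebraic group with Lie algebra $\mathfrak g$, $V$ a finite-dimensional $G$-module such that no nonzero ideal of $\mathfrak g$ acts trivially on $V$, and $\mathfrak q=\mathfrak g\ltimes V$ is the semi-direct product with $V$ an abelian ideal; $\mathfrak q=\mathrm{Lie}\,Q$, $Q=G\ltimes\exp(V)$. Identify $\mathfrak g\cong\mathfrak g^*$, so $\mathfrak q^*=\mathfrak g\oplus V^*$; $\mathcal S(\mathfrak q)=\mathbb C[\mathfrak q^*]$ is bigraded by $\deg_{\mathfrak g}$ and $\deg_V$, and $\deg=\deg_{\mathfrak g}+\deg_V$ for bi-homogeneous elements. Index: $\operatorname{ind}\mathfrak l=\min_{\gamma\in\mathfrak l^*}\dim\mathfrak l_\gamma$; $\mathbf b(\mathfrak l)=(\dim\mathfrak l+\operatorname{ind}\mathfrak l)/2$.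 For $x\in V^*$, $\mathfrak g_x,G_x$ are stabilisers. Restriction map $\varphi_x:\mathbb C[\mathfrak q^*]^Q\to\mathcal S(\mathfrak g_x)^{G_x}$: restrict to $\mathfrak g+x$, identify with $\mathfrak g$ with $x$ as origin; the result is invariant under translation by $\mathrm{Ann}(\mathfrak g_x)$, hence a polynomial on $\mathfrak g/\mathrm{Ann}(\mathfrak g_x)\cong\mathfrak g_x^*$. ''Generic'' means on a nonempty Zariski-open subset. Raïs' formula: $\operatorname{ind}\mathfrak q=\dim V-(\dim\mathfrak g-\dim\mathfrak g_x)+\operatorname{ind}\mathfrak g_x$ for generic $x\in V^*$. *)

From HB Require Import structures.
From mathcomp Require Import all_boot all_order all_algebra.
From mathcomp Require Import mpoly.
From mathcomp Require Import complex.
From mathcomp Require Import reals.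
From Stdlib Require Import ClassicalEpsilon.

Set Implicit Arguments.
Unset Strict Implicit.
Unset Printing Implicit Defensive.

Import Order.TTheory GRing.Theory Num.Theory.
Local Open Scope ring_scope.

(* Conventions.  A finite-dimensional Lie algebra of dimension N over a      *)
(* field K is K^N = 'rV[K]_N (row vectors, standard basis [ev i]) with a     *)
(* bracket br : 'rV_N -> 'rV_N -> 'rV_N.  The dual l^* is also 'rV_N, the    *)
(* pairing being [pair gamma y = sum_k gamma_k y_k].  Subspaces are the row  *)
(* spaces of matrices (mxalgebra).  S(l) = C[l^*] is {mpoly K[N]}, the       *)
(* variable 'X_i being the basis vector e_i seen as a linear form on l^*.   *)

Section Defs.
Variable K : fieldType.

Definition ev {N : nat} (i : 'I_N) : 'rV[K]_N := delta_mx 0 i.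

Definition pair {N : nat} (gamma y : 'rV[K]_N) : K := \sum_k gamma 0 k * y 0 k.

Definition formmx {N : nat} (br : 'rV[K]_N -> 'rV[K]_N -> 'rV[K]_N)
  (gamma : 'rV[K]_N) : 'M[K]_N :=
  \matrix_(i, j) pair gamma (br (ev i) (ev j)).

(* For a subalgebra s (row space of U) of l and gamma in l^* (restricted to
   s), the stabiliser s_gamma = { a in s | gamma([a,b]) = 0 for all b in s }. *)
Definition stab_sub {N : nat} (br : 'rV[K]_N -> 'rV[K]_N -> 'rV[K]_N)
  (U : 'M[K]_N) (gamma : 'rV[K]_N) : 'M[K]_N :=
  (U :&: kermx (formmx br gamma *m U^T))%MS.

Definition pdec (P : Prop) : bool :=
  if excluded_middle_informative P then true else false.

Lemma ind_sub_ex {N : nat} (br : 'rV[K]_N -> 'rV[K]_N -> 'rV[K]_N)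
  (U : 'M[K]_N) :
  exists k, pdec (exists gamma : 'rV[K]_N, \rank (stab_sub br U gamma) = k).
Proof.
exists (\rank (stab_sub br U 0)); rewrite /pdec.
case: excluded_middle_informative => // H.
by exfalso; apply: H; exists 0.
Qed.

(* ind s = min_{gamma in s^*} dim s_gamma  (every element of s^* is the
   restriction of an element of l^* ) *)
Definition ind_sub {N : nat} (br : 'rV[K]_N -> 'rV[K]_N -> 'rV[K]_N)
  (U : 'M[K]_N) : nat := ex_minn (ind_sub_ex br U).

Definition ind {N : nat} (br : 'rV[K]_N -> 'rV[K]_N -> 'rV[K]_N) : nat :=
  ind_sub br 1%:M.

Definition bb_sub {N : nat} (br : 'rV[K]_N -> 'rV[K]_N -> 'rV[K]_N)
  (U : 'M[K]_N) : nat := ((\rank U + ind_sub br U) %/ 2)%N.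

Definition bb {N : nat} (br : 'rV[K]_N -> 'rV[K]_N -> 'rV[K]_N) : nat :=
  bb_sub br 1%:M.

(* bracket of g from structure constants c i j = [e_i, e_j] (bilinear) *)
Definition gbr {n : nat} (c : 'I_n -> 'I_n -> 'rV[K]_n) (a b : 'rV[K]_n)
  : 'rV[K]_n := \sum_i \sum_j (a 0 i * b 0 j) *: c i j.

Definition is_lie {N : nat} (br : 'rV[K]_N -> 'rV[K]_N -> 'rV[K]_N) : Prop :=
  (forall a b, br a b = - br b a) /\
  (forall a b d, br a (br b d) + br b (br d a) + br d (br a b) = 0).

(* the representation: A i is the matrix of e_i acting on V = K^m; a acts
   by the matrix actm A a, i.e. (a . w)_k = sum_l (actm A a)_{k l} w_l *)
Definition actm {n m : nat} (A : 'I_n -> 'M[K]_m) (a : 'rV[K]_n) : 'M[K]_m :=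
  \sum_i a 0 i *: A i.

Definition act {n m : nat} (A : 'I_n -> 'M[K]_m) (a : 'rV[K]_n) (w : 'rV[K]_m)
  : 'rV[K]_m := w *m (actm A a)^T.

Definition is_rep {n m : nat} (c : 'I_n -> 'I_n -> 'rV[K]_n)
  (A : 'I_n -> 'M[K]_m) : Prop :=
  forall a b, actm A (gbr c a b) = actm A a *m actm A b - actm A b *m actm A a.

Definition admx {n : nat} (c : 'I_n -> 'I_n -> 'rV[K]_n) (i : 'I_n) : 'M[K]_n :=
  \matrix_(j, k) gbr c (ev i) (ev j) 0 k.

Definition ad_stable {n : nat} (c : 'I_n -> 'I_n -> 'rV[K]_n) (U : 'M[K]_n)
  : bool := [forall i, (U *m admx c i <= U)%MS].

(* g reductive: the adjoint representation is semisimple, i.e. every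
   ad-stable subspace has an ad-stable complement *)
Definition reductive {n : nat} (c : 'I_n -> 'I_n -> 'rV[K]_n) : Prop :=
  forall U : 'M[K]_n, ad_stable c U ->
    exists W : 'M[K]_n, [/\ ad_stable c W, (U :&: W == (0 : 'M[K]_n))%MS & (U + W == 1%:M)%MS].

Definition no_trivial_ideal {n m : nat} (c : 'I_n -> 'I_n -> 'rV[K]_n)
  (A : 'I_n -> 'M[K]_m) : Prop :=
  forall I : 'M[K]_n, ad_stable c I ->
    (forall a : 'rV[K]_n, (a <= I)%MS -> actm A a = 0) -> (I == (0 : 'M[K]_n))%MS.

(* the semi-direct product q = g |x V on K^(n+m) (first n coordinates: g) *)
Definition qbr {n m : nat} (c : 'I_n -> 'I_n -> 'rV[K]_n) (A : 'I_n -> 'M[K]_m)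
  (y z : 'rV[K]_(n + m)) : 'rV[K]_(n + m) :=
  row_mx (gbr c (lsubmx y) (lsubmx z))
         (act A (lsubmx y) (rsubmx z) - act A (lsubmx z) (rsubmx y)).

(* stabiliser g_x of x in V^* : { a | x(a . w) = 0 for all w }; the i-th
   row of the matrix below is x o A i, so g_x is its (row) kernel *)
Definition gx {n m : nat} (A : 'I_n -> 'M[K]_m) (x : 'rV[K]_m) : 'M[K]_n :=
  kermx (\matrix_(i, l) (x *m A i) 0 l).

Definition lin {N : nat} (v : 'rV[K]_N) : {mpoly K[N]} := \sum_i v 0 i *: 'X_i.

(* the derivation of S(l) extending ad(y) *)
Definition adpoly {N : nat} (br : 'rV[K]_N -> 'rV[K]_N -> 'rV[K]_N)
  (y : 'rV[K]_N) (H : {mpoly K[N]}) : {mpoly K[N]} :=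
  \sum_k lin (br y (ev k)) * mderiv k H.

Definition lie_invariant {N : nat} (br : 'rV[K]_N -> 'rV[K]_N -> 'rV[K]_N)
  (H : {mpoly K[N]}) : Prop := forall i : 'I_N, adpoly br (ev i) H = 0.

Definition gpart {n m : nat} (mono : 'X_{1..n + m}) : nat :=
  (\sum_(i < n + m | (i < n)%N) mono i)%N.
Definition vpart {n m : nat} (mono : 'X_{1..n + m}) : nat :=
  (\sum_(i < n + m | (n <= i)%N) mono i)%N.

Definition bihomog {n m : nat} (H : {mpoly K[n + m]}) : Prop :=
  forall mo1 mo2, mo1 \in msupp H -> mo2 \in msupp H ->
    gpart mo1 = gpart mo2 /\ vpart mo1 = vpart mo2.

Definition degg {n m : nat} (H : {mpoly K[n + m]}) : nat :=
  (\max_(mo <- msupp H) gpart mo)%N.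
Definition degV {n m : nat} (H : {mpoly K[n + m]}) : nat :=
  (\max_(mo <- msupp H) vpart mo)%N.
Definition totdeg {N : nat} (H : {mpoly K[N]}) : nat := (msize H).-1.

Definition in_CVstar_inv {n m : nat} (c : 'I_n -> 'I_n -> 'rV[K]_n)
  (A : 'I_n -> 'M[K]_m) (H : {mpoly K[n + m]}) : Prop :=
  (forall mo, mo \in msupp H -> gpart mo = 0%N) /\
  (forall i : 'I_n, adpoly (qbr c A) (ev (lshift m i)) H = 0).

(* phi_x : restriction of H to g + x (x in V^* ), as a polynomial on g^* *)
Definition phi {n m : nat} (x : 'rV[K]_m) (H : {mpoly K[n + m]}) : {mpoly K[n]} :=
  H \mPo [tuple match split i with
                | inl a => 'X_a
                | inr b => (x 0 b)%:MP
                end | i < n + m].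

(* S(g_x) = polynomials on g^* lie_invariant under translation by Ann(g_x);
   S(g_x)^{g_x} = those moreover annihilated by ad(a), a in g_x. *)
Definition in_Sgx_inv {n m : nat} (c : 'I_n -> 'I_n -> 'rV[K]_n)
  (A : 'I_n -> 'M[K]_m) (x : 'rV[K]_m) (F : {mpoly K[n]}) : Prop :=
  (forall xi eta : 'rV[K]_n, eta *m (gx A x)^T = 0 ->
      meval (fun i => (xi + eta) 0 i) F = meval (fun i => xi 0 i) F) /\
  (forall a : 'rV[K]_n, (a <= gx A x)%MS -> adpoly (gbr c) a F = 0).

Definition freely_generate {n m : nat} (c : 'I_n -> 'I_n -> 'rV[K]_n)
  (A : 'I_n -> 'M[K]_m) (x : 'rV[K]_m) (l : nat) (Fs : l.-tuple {mpoly K[n]})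
  : Prop :=
  [/\ forall i : 'I_l, in_Sgx_inv c A x (tnth Fs i),
      forall P : {mpoly K[l]}, P \mPo Fs = 0 -> P = 0 &
      forall F, in_Sgx_inv c A x F -> exists P : {mpoly K[l]}, F = P \mPo Fs].

(* a property of x in V^* = K^m holds generically: on a nonempty Zariski
   open subset (equivalently, on some basic open set {p <> 0}, p <> 0) *)
Definition generic {m : nat} (P : 'rV[K]_m -> Prop) : Prop :=
  exists p : {mpoly K[m]}, p != 0 /\
    forall x : 'rV[K]_m, meval (fun i => x 0 i) p != 0 -> P x.

End Defs.

From Pilot Require Import Defs.
From HB Require Import structures.
From mathcomp Require Import all_boot all_order all_algebra.
From mathcomp Require Import mpoly.
From mathcomp Require Import complex.
From mathcomp Require Import reals.
From mathcomp Require Import zify.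
From Stdlib Require Import ClassicalEpsilon.

Set Implicit Arguments.
Unset Strict Implicit.
Unset Printing Implicit Defensive.

Import Order.TTheory GRing.Theory Num.Theory.
Local Open Scope ring_scope.

(* At a point (xi, x) of q^* = g^* + V^*, the form of q is the skew block
   matrix [[F_xi, B_x], [-B_x^T, 0]], with F_xi the form of g at xi and B_x
   the matrix of a |-> a . x; its kernel has dimension
   m - rank B_x + dim (g_x)_xi.  Regular points of q^* form a nonempty
   Zariski-open set, so one of them has a generic V^*-part x; there this gives
   Rais' formula ind q = ind g_x + m - rank B_x, and since
   dim g_x = n - rank B_x, b(q) = m + b(g_x).  As deg = deg_g + deg_V for
   bihomogeneous H_i and the H_j with j >= ind g_x have g-degree 0, the
   total degree is b(g_x) + sum deg_V H_i, whence the equivalence. *)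

Section SkewBlockKernel.
Variable K : fieldType.

Lemma orth_kermx_sub_tr (p q r : nat) (B : 'M[K]_(p, q)) (u : 'M[K]_(r, p)) :
  u *m (kermx B)^T = 0 -> (u <= B^T)%MS.
Proof.
move=> u_orth.
have u_sub : (u <= kermx (kermx B)^T)%MS by apply/sub_kermxP.
have BT_sub : (B^T <= kermx (kermx B)^T)%MS.
  by apply/sub_kermxP; rewrite -trmx_mul mulmx_ker trmx0.
have rank_eq : \rank (kermx (kermx B)^T) = \rank B^T.
  by rewrite mxrank_ker mxrank_tr mxrank_ker mxrank_tr subKn ?rank_leq_row.
have := mxrank_leqif_sup BT_sub; rewrite rank_eq => /leqif_refl ker_sub.
exact: submx_trans u_sub ker_sub.
Qed.

Lemma mul_col_mx1_0 (p a b : nat) (Y : 'M[K]_(p, a + b)) :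
  Y *m col_mx 1%:M 0 = lsubmx Y.
Proof. by rewrite -{1}(hsubmxK Y) mul_row_col mulmx1 mulmx0 addr0. Qed.

Lemma mul_col_mx0_1 (p a b : nat) (Y : 'M[K]_(p, a + b)) :
  Y *m col_mx 0 1%:M = rsubmx Y.
Proof. by rewrite -{1}(hsubmxK Y) mul_row_col mulmx1 mulmx0 add0r. Qed.

Variables (n m : nat) (G : 'M[K]_n) (B : 'M[K]_(n, m)).
Let F := block_mx G B (- B^T) 0.
Let S := (kermx B :&: kermx (G *m (kermx B)^T))%MS.

Lemma sub_kermx_skew_block (p : nat) (Y : 'M[K]_(p, n + m)) :
  (Y <= kermx F)%MS =
  (lsubmx Y *m G == rsubmx Y *m B^T) && (lsubmx Y *m B == 0).
Proof.
rewrite sub_kermx -{1}(hsubmxK Y) mul_row_block mulmx0 addr0 mulmxN.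
by rewrite row_mx_eq0 subr_eq0.
Qed.

Lemma kermx_skew_block_lproj : (kermx F *m col_mx 1%:M 0 == S)%MS.
Proof.
apply/andP; split.
  have := submx_refl (kermx F).
  rewrite sub_kermx_skew_block => /andP[/eqP GY /eqP BY].
  rewrite mul_col_mx1_0 sub_capmx !sub_kermx BY eqxx /= mulmxA GY -mulmxA.
  by rewrite -trmx_mul mulmx_ker trmx0 mulmx0.
have := submx_refl S; rewrite sub_capmx !sub_kermx => /andP[/eqP BS /eqP GS].
have /submxP[w GSw] : (S *m G <= B^T)%MS.
  by apply: orth_kermx_sub_tr; rewrite -mulmxA.
have Sw_ker : (row_mx S w <= kermx F)%MS.
  by rewrite sub_kermx_skew_block row_mxKl row_mxKr GSw BS !eqxx.
by have := submxMr (col_mx 1%:M 0) Sw_ker; rewrite mul_col_mx1_0 row_mxKl.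
Qed.

Lemma kermx_skew_block_rproj :
  ((kermx F :&: kermx (col_mx 1%:M 0)) *m col_mx 0 1%:M == kermx B^T)%MS.
Proof.
apply/andP; split.
  have := submx_refl (kermx F :&: kermx (col_mx 1%:M 0))%MS.
  rewrite sub_capmx sub_kermx_skew_block sub_kermx mul_col_mx1_0.
  case/andP => /andP[/eqP GY _] /eqP Y0.
  by rewrite mul_col_mx0_1 sub_kermx -GY Y0 mul0mx.
have BT_ker : kermx B^T *m B^T = 0 by rewrite mulmx_ker.
have Y_sub : (row_mx 0 (kermx B^T) <= kermx F :&: kermx (col_mx 1%:M 0))%MS.
  rewrite sub_capmx sub_kermx_skew_block sub_kermx mul_col_mx1_0.
  by rewrite !row_mxKl row_mxKr BT_ker !mul0mx !eqxx.
by have := submxMr (col_mx 0 1%:M) Y_sub; rewrite mul_col_mx0_1 row_mxKr.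
Qed.

Lemma mxrank_kermx_skew_block :
  (\rank (kermx F) + \rank B = \rank S + m)%N.
Proof.
set X := (kermx F :&: kermx (col_mx 1%:M 0))%MS.
have X_proj0 : (X :&: kermx (col_mx 0 1%:M))%MS = 0.
  have := submx_refl (X :&: kermx (col_mx 0 1%:M))%MS.
  rewrite !sub_capmx !sub_kermx mul_col_mx1_0 mul_col_mx0_1.
  case/andP => /andP[_ /eqP l0] /eqP r0.
  by rewrite -[LHS]hsubmxK l0 r0 row_mx0.
have := mxrank_mul_ker (kermx F) (col_mx 1%:M 0).
rewrite (eqmx_rank kermx_skew_block_lproj) => <-.
have := mxrank_mul_ker X (col_mx 0 1%:M).
rewrite (eqmx_rank kermx_skew_block_rproj) X_proj0 mxrank0 addn0 => <-.
by rewrite mxrank_ker mxrank_tr -addnA subnK ?rank_leq_col.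
Qed.

End SkewBlockKernel.

Section SemidirectForm.
Variable K : fieldType.
Local Notation ev := (@ev K _).

Lemma pair_row_mx (p q : nat) (a1 a2 : 'rV[K]_p) (b1 b2 : 'rV[K]_q) :
  pair (row_mx a1 b1) (row_mx a2 b2) = pair a1 a2 + pair b1 b2.
Proof.
rewrite /pair big_split_ord /=; congr (_ + _); apply: eq_bigr => k _.
  by rewrite (row_mxEl a1) (row_mxEl a2).
by rewrite (row_mxEr a1) (row_mxEr a2).
Qed.

Lemma pair0r (p : nat) (a : 'rV[K]_p) : pair a 0 = 0.
Proof. by rewrite /pair big1 // => i _; rewrite mxE mulr0. Qed.

Lemma pairNr (p : nat) (a b : 'rV[K]_p) : pair a (- b) = - pair a b.
Proof. by rewrite /pair -sumrN; apply: eq_bigr => k _; rewrite mxE mulrN. Qed.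

Lemma pair_ev_mul_tr (p q : nat) (x : 'rV[K]_p) (M : 'M[K]_(p, q)) j :
  pair x (ev j *m M^T) = (x *m M) 0 j.
Proof.
by rewrite /pair /Defs.ev -rowE mxE; apply: eq_bigr => k _; rewrite !mxE.
Qed.

Lemma mxrank_stab_full (N : nat) (br : 'rV[K]_N -> 'rV[K]_N -> 'rV[K]_N) g :
  \rank (stab_sub br 1%:M g) = (N - \rank (formmx br g))%N.
Proof.
rewrite /stab_sub trmx1 mulmx1 -mxrank_ker.
apply/eqmx_rank/andP; split; first by rewrite capmxSr.
by rewrite sub_capmx submx1 submx_refl.
Qed.

Variables (n m : nat) (c : 'I_n -> 'I_n -> 'rV[K]_n) (A : 'I_n -> 'M[K]_m).

(* The matrix of [a |-> a . x : g -> V^*], whose kernel is [gx A x]. *)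
Definition coact_mx (x : 'rV[K]_m) : 'M[K]_(n, m) :=
  \matrix_(i, l) (x *m A i) 0 l.

Lemma gbr0l b : gbr c 0 b = 0.
Proof.
by rewrite /gbr big1 // => i _; rewrite big1 // => j _; rewrite mxE mul0r scale0r.
Qed.

Lemma gbr0r a : gbr c a 0 = 0.
Proof.
by rewrite /gbr big1 // => i _; rewrite big1 // => j _; rewrite mxE mulr0 scale0r.
Qed.

Lemma act0l w : act A 0 w = 0.
Proof.
rewrite /act (_ : actm A 0 = 0) ?trmx0 ?mulmx0 //.
by rewrite /actm big1 // => i _; rewrite mxE scale0r.
Qed.

Lemma act0r a : act A a 0 = 0.
Proof. by rewrite /act mul0mx. Qed.

Lemma actm_ev i : actm A (ev i) = A i.
Proof.
rewrite /actm (bigD1 i) //= big1 ?addr0.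
  by rewrite /Defs.ev mxE !eqxx scale1r.
by move=> j /negbTE ji; rewrite /Defs.ev mxE ji scale0r.
Qed.

Lemma qbr_row_mx a1 w1 a2 w2 : qbr c A (row_mx a1 w1) (row_mx a2 w2) =
  row_mx (gbr c a1 a2) (act A a1 w2 - act A a2 w1).
Proof. by rewrite /qbr !row_mxKl !row_mxKr. Qed.

Lemma ev_lshift a : ev (lshift m a) = row_mx (ev a) 0 :> 'rV[K]_(n + m).
Proof. by rewrite /Defs.ev delta_mx_lshift. Qed.

Lemma ev_rshift a : ev (rshift n a) = row_mx 0 (ev a) :> 'rV[K]_(n + m).
Proof. by rewrite /Defs.ev delta_mx_rshift. Qed.

Lemma formmx_qbr (xi : 'rV[K]_n) (x : 'rV[K]_m) :
  formmx (qbr c A) (row_mx xi x) =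
  block_mx (formmx (gbr c) xi) (coact_mx x) (- (coact_mx x)^T) 0.
Proof.
apply/matrixP => i j; rewrite mxE.
case: (split_ordP i) => {}i ->; case: (split_ordP j) => {}j ->.
all: rewrite ?block_mxEul ?block_mxEur ?block_mxEdl ?block_mxEdr
       ?ev_lshift ?ev_rshift qbr_row_mx pair_row_mx ?gbr0l ?gbr0r ?act0l ?act0r
       ?subrr ?sub0r ?subr0 ?pair0r ?addr0 ?add0r.
- by rewrite mxE.
- by rewrite /act actm_ev pair_ev_mul_tr !mxE.
- by rewrite /act actm_ev pairNr pair_ev_mul_tr !mxE.
- by rewrite mxE.
Qed.

Lemma mxrank_stab_qbr (xi : 'rV[K]_n) (x : 'rV[K]_m) :
  (\rank (stab_sub (qbr c A) 1%:M (row_mx xi x)) + \rank (coact_mx x) =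
   \rank (stab_sub (gbr c) (gx A x) xi) + m)%N.
Proof.
by rewrite mxrank_stab_full -mxrank_ker formmx_qbr mxrank_kermx_skew_block.
Qed.

End SemidirectForm.

Section MpolyNonroot.
Variable K : numFieldType.

Lemma poly_exists_nonroot (q : {poly K}) : q != 0 -> exists t, q.[t] != 0.
Proof.
move=> q0; pose rs := [seq i%:R | i <- iota 0 (size q)] : seq K.
have rs_uniq : uniq rs.
  by rewrite map_inj_uniq ?iota_uniq // => a b /eqP; rewrite eqr_nat => /eqP.
case rs_roots: (all (root q) rs).
  by have := max_poly_roots q0 rs_roots rs_uniq; rewrite size_map size_iota ltnn.
by move/negbT: rs_roots; rewrite -has_predC => /hasP[t _ qt]; exists t.
Qed.

Definition extend_last k (v : 'I_k -> K) (t : K) (i : 'I_k.+1) : K :=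
  if unlift ord_max i is Some j then v j else t.

Lemma widen_ord_max_lift k (i : 'I_k) : widen_ord (leqnSn k) i = lift ord_max i.
Proof. by apply: val_inj; rewrite /= /bump leqNgt ltn_ord. Qed.

Lemma meval_extend_last k (p : {mpoly K[k.+1]}) v t :
  meval (extend_last v t) p = (map_poly (meval v) (muni p)).[t].
Proof.
rewrite muniE rmorph_sum horner_sum mevalE; apply: eq_bigr => mo _.
have map_C (q : {mpoly K[k]}) : map_poly (meval v) q%:P = (meval v q)%:P.
  by rewrite map_polyC.
rewrite -mul_polyC rmorphM /= map_C map_polyXn !hornerE.
rewrite mevalZ mevalX big_ord_recr /= /extend_last unlift_none mulrA.
congr (_ * _ * _); apply: eq_bigr => i _.
by rewrite {1}widen_ord_max_lift liftK mnmE.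
Qed.

Lemma mcoeff_muni k (p : {mpoly K[k.+1]}) (mo : 'X_{1..k.+1}) :
  ((muni p)`_(mo ord_max))@_[multinom mo (widen_ord (leqnSn k) i) | i < k] =
  p@_mo.
Proof.
pose trunc (mx : 'X_{1..k.+1}) := [multinom mx (widen_ord (leqnSn k) i) | i < k].
have trunc_neq (mx : 'X_{1..k.+1}) : mx ord_max = mo ord_max -> mx != mo ->
    (trunc mx == trunc mo) = false.
  move=> last_eq; apply: contraNF => /eqP trunc_eq; apply/eqP/mnmP => i.
  case: (unliftP ord_max i) => [j ->|->] //.
  have := congr1 (fun z : 'X_{1..k} => z j) trunc_eq.
  by rewrite !mnmE widen_ord_max_lift.
rewrite muniE coef_sumMXn raddf_sum big_mkcond /=.
have [mo_in|mo_out] := boolP (mo \in msupp p).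
  rewrite (bigD1_seq mo) ?msupp_uniq //= eqxx mcoeffZ mcoeffX eqxx mulr1.
  rewrite big1 ?addr0 // => mx mx_mo; case: eqP => // last_eq.
  by rewrite mcoeffZ mcoeffX trunc_neq ?mulr0.
rewrite (memN_msupp_eq0 mo_out) big1_seq // => mx /andP[_ mx_in].
case: eqP => // last_eq; rewrite mcoeffZ mcoeffX trunc_neq ?mulr0 //.
by apply: contraNneq mo_out => <-.
Qed.

Lemma mpoly_exists_nonroot k (p : {mpoly K[k]}) :
  p != 0 -> exists v, meval v p != 0.
Proof.
elim: k p => [|k IH] p p0.
  exists (fun _ => 0); rewrite [p]nvar0_mpolyC mevalC.
  by apply: contraNneq p0 => p00; rewrite [p]nvar0_mpolyC p00.
have [mo pmo0] : exists mo, p@_mo != 0.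
  case supp: (msupp p) => [|mo s]; last first.
    by exists mo; rewrite -mcoeff_msupp supp mem_head.
  case/negP: p0; apply/eqP/mpolyP => mx.
  by rewrite mcoeff0 memN_msupp_eq0 // supp.
set C := (muni p)`_(mo ord_max).
have C0 : C != 0.
  by apply: contraNneq pmo0 => C00; rewrite -mcoeff_muni -/C C00 mcoeff0.
have [v Cv] := IH C C0.
set Q := map_poly (meval v) (muni p).
have Q0 : Q != 0.
  apply: contraNneq Cv => Q00.
  have := congr1 (fun z : {poly K} => z`_(mo ord_max)) Q00.
  by rewrite /= coef0 /Q coef_map_id0 ?meval0 // => ->.
have [t Qt] := poly_exists_nonroot Q0.
by exists (extend_last v t); rewrite meval_extend_last.
Qed.

End MpolyNonroot.

Section GenericPoint.
Variable K : numFieldType.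

Lemma horner_mmap_polyC k (h : 'I_k -> {poly K}) (p : {mpoly K[k]}) (t : K) :
  (mmap polyC h p).[t] = meval (fun i => (h i).[t]) p.
Proof.
rewrite /meval /mmap horner_sum; apply: eq_bigr => mo _.
rewrite hornerM hornerC /mmap1 horner_prod; congr (_ * _).
by apply: eq_bigr => i _; rewrite horner_exp.
Qed.

Lemma horner_det_pencil (N : nat) (M0 M1 : 'M[K]_N) (t : K) :
  (\det (map_mx polyC M0 + 'X *: map_mx polyC M1)).[t] = \det (M0 + t *: M1).
Proof.
rewrite -horner_evalE -det_map_mx; congr (\det _); apply/matrixP => i j.
by rewrite !mxE /= horner_evalE !hornerE.
Qed.

Lemma formmx_linear (N : nat) (br : 'rV[K]_N -> 'rV[K]_N -> 'rV[K]_N) a b t :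
  formmx br (a + t *: b) = formmx br a + t *: formmx br b.
Proof.
apply/matrixP => i j; rewrite !mxE /pair mulr_sumr -big_split.
by apply: eq_bigr => k _; rewrite !mxE mulrDl mulrA.
Qed.

Lemma mxrank_geq_det_neq0 (N r : nat) (M : 'M[K]_N)
    (B1 : 'M[K]_(r, N)) (B2 : 'M[K]_(N, r)) :
  \det (B1 *m M *m B2) != 0 -> (r <= \rank M)%N.
Proof.
move=> det_neq0; set D := B1 *m M *m B2.
have D_unit : D \in unitmx by rewrite unitmxE unitfE.
apply: (@mulmx1_min_rank _ _ _ _ M (invmx D *m B1) B2).
have -> : invmx D *m B1 *m M *m B2 = invmx D *m D by rewrite /D !mulmxA.
exact: mulVmx.
Qed.

Lemma exists_full_rank_minor (N : nat) (M : 'M[K]_N) :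
  exists B1 B2, B1 *m M *m B2 = 1%:M :> 'M[K]_(\rank M).
Proof.
have [B1 B1_inv] := row_fullP (col_base_full M).
have [B2 B2_inv] := row_freeP (row_base_free M).
exists B1, B2.
have -> : B1 *m M *m B2 = B1 *m (col_base M *m row_base M) *m B2.
  by rewrite mulmx_base.
by rewrite mulmxA B1_inv mul1mx B2_inv.
Qed.

(* Along the line from g0 to a point where p does not vanish, both a maximal
   minor of the form and p are nonzero polynomials in the parameter. *)
Lemma exists_max_rank_form_nonroot (n m : nat)
    (br : 'rV[K]_(n + m) -> 'rV[K]_(n + m) -> 'rV[K]_(n + m))
    (p : {mpoly K[m]}) (g0 : 'rV[K]_(n + m)) :
  p != 0 -> (forall g, (\rank (formmx br g) <= \rank (formmx br g0))%N) ->
  exists g, \rank (formmx br g) = \rank (formmx br g0) /\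
            meval (fun i => rsubmx g 0 i) p != 0.
Proof.
move=> p0 g0_max; have [v pv] := mpoly_exists_nonroot p0.
set d := row_mx 0 (\row_i v i) - g0.
have [B1 [B2 minor1]] := exists_full_rank_minor (formmx br g0).
set D := \det (map_mx polyC (B1 *m formmx br g0 *m B2) +
               'X *: map_mx polyC (B1 *m formmx br d *m B2)).
have D_eval t : D.[t] = \det (B1 *m formmx br (g0 + t *: d) *m B2).
  rewrite horner_det_pencil formmx_linear mulmxDr mulmxDl.
  by rewrite -scalemxAr -scalemxAl.
set P := mmap polyC (fun i => (rsubmx g0 0 i)%:P + 'X * (rsubmx d 0 i)%:P) p.
have P_eval t : P.[t] = meval (fun i => rsubmx (g0 + t *: d) 0 i) p.
  rewrite horner_mmap_polyC; apply: meval_eq => i.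
  by rewrite !mxE !hornerE mulrC.
have P0 : P != 0.
  apply: contraNneq pv => P00; have := P_eval 1.
  rewrite P00 horner0 scale1r addrC subrK row_mxKr => ->.
  by apply/eqP; apply: meval_eq => i; rewrite mxE.
have D0 : D != 0.
  apply: contraNneq (oner_neq0 K) => D00; have := D_eval 0.
  by rewrite D00 horner0 scale0r addr0 minor1 det1 => ->.
have [t] := poly_exists_nonroot (mulf_neq0 P0 D0).
rewrite hornerM mulf_eq0 negb_or => /andP[Pt Dt].
exists (g0 + t *: d); split; last by rewrite -P_eval.
apply/eqP; rewrite eqn_leq g0_max /=.
by apply: (mxrank_geq_det_neq0 (B1 := B1) (B2 := B2)); rewrite -D_eval.
Qed.

End GenericPoint.

Section Index.
Variable K : fieldType.

Lemma ind_sub_attained (N : nat) (br : 'rV[K]_N -> 'rV[K]_N -> 'rV[K]_N)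
    (U : 'M[K]_N) :
  exists g, \rank (stab_sub br U g) = ind_sub br U.
Proof.
rewrite /ind_sub; case: ex_minnP => k + _.
by rewrite /pdec; case: excluded_middle_informative.
Qed.

Lemma ind_sub_min (N : nat) (br : 'rV[K]_N -> 'rV[K]_N -> 'rV[K]_N)
    (U : 'M[K]_N) g :
  (ind_sub br U <= \rank (stab_sub br U g))%N.
Proof.
rewrite /ind_sub; case: ex_minnP => k _; apply.
rewrite /pdec; case: excluded_middle_informative => // no_g.
by case: no_g; exists g.
Qed.

Variables (n m : nat) (c : 'I_n -> 'I_n -> 'rV[K]_n) (A : 'I_n -> 'M[K]_m).

Lemma ind_qbr_rais (xi : 'rV[K]_n) (x : 'rV[K]_m) :
  \rank (stab_sub (qbr c A) 1%:M (row_mx xi x)) = ind (qbr c A) ->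
  (ind (qbr c A) + \rank (coact_mx A x) = ind_sub (gbr c) (gx A x) + m)%N.
Proof.
move=> xi_regular.
have [xi' xi'_regular] := ind_sub_attained (gbr c) (gx A x).
have := mxrank_stab_qbr c A xi x; have := mxrank_stab_qbr c A xi' x.
have := ind_sub_min (gbr c) (gx A x) xi.
have := ind_sub_min (qbr c A) 1%:M (row_mx xi' x).
rewrite xi_regular xi'_regular /ind; lia.
Qed.

Lemma bb_qbr_rais (xi : 'rV[K]_n) (x : 'rV[K]_m) :
  \rank (stab_sub (qbr c A) 1%:M (row_mx xi x)) = ind (qbr c A) ->
  bb (qbr c A) = (m + bb_sub (gbr c) (gx A x))%N.
Proof.
move=> /ind_qbr_rais rais.
have dim_gx : \rank (gx A x) = (n - \rank (coact_mx A x))%N by rewrite mxrank_ker.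
have rank_le : (\rank (coact_mx A x) <= n)%N := rank_leq_row _.
rewrite /bb /bb_sub mxrank1 dim_gx -/(ind (qbr c A)).
have -> : (n + m + ind (qbr c A) =
           m * 2 + (n - \rank (coact_mx A x) + ind_sub (gbr c) (gx A x)))%N.
  by lia.
by rewrite divnMDl.
Qed.

End Index.

Lemma exists_regular_nonroot (K : numFieldType) (n m : nat)
    (br : 'rV[K]_(n + m) -> 'rV[K]_(n + m) -> 'rV[K]_(n + m))
    (p : {mpoly K[m]}) :
  p != 0 -> exists g, \rank (stab_sub br 1%:M g) = ind br /\
                      meval (fun i => rsubmx g 0 i) p != 0.
Proof.
move=> p0; have [g0 g0_regular] := ind_sub_attained br 1%:M.
have g0_max g : (\rank (formmx br g) <= \rank (formmx br g0))%N.
  have := ind_sub_min br 1%:M g; rewrite -g0_regular !mxrank_stab_full.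
  have := rank_leq_row (formmx br g); have := rank_leq_row (formmx br g0); lia.
have [g [g_max pg]] := exists_max_rank_form_nonroot p0 g0_max.
by exists g; rewrite /ind -g0_regular !mxrank_stab_full g_max.
Qed.

Section Degrees.
Variable K : fieldType.

Lemma bigmax_seq_const (T : eqType) (s : seq T) (f : T -> nat) (k : nat) :
  s != [::] -> {in s, forall x, f x = k} -> (\max_(x <- s) f x)%N = k.
Proof.
elim: s => // a s IH _ f_const; rewrite big_cons f_const ?mem_head //.
case: s IH f_const => [|b s] IH f_const; first by rewrite big_nil maxn0.
by rewrite IH ?maxnn // => x x_in; apply: f_const; rewrite in_cons x_in orbT.
Qed.

Lemma mdeg_gpart_vpart (n m : nat) (mo : 'X_{1..n + m}) :
  mdeg mo = (gpart mo + vpart mo)%N.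
Proof.
rewrite mdegE /gpart /vpart (bigID (fun i : 'I_(n + m) => (i < n)%N)) /=.
by congr (_ + _)%N; apply: eq_bigl => i; rewrite -leqNgt.
Qed.

Lemma totdeg_bihomog (n m : nat) (H : {mpoly K[n + m]}) :
  bihomog H -> totdeg H = (degg H + degV H)%N.
Proof.
move=> H_bihomog; rewrite /totdeg msizeE /degg /degV.
case supp: (msupp H) => [|mo0 s]; first by rewrite !big_nil.
have mo0_in : mo0 \in msupp H by rewrite supp mem_head.
have supp_neq0 : msupp H != [::] by rewrite supp.
rewrite -supp (@bigmax_seq_const _ _ _ (gpart mo0 + vpart mo0).+1) //; last first.
  move=> mo mo_in; rewrite mdeg_gpart_vpart.
  by have [-> ->] := H_bihomog _ _ mo_in mo0_in.
rewrite (@bigmax_seq_const _ _ _ (gpart mo0)) //; last first.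
  by move=> mo mo_in; have [-> _] := H_bihomog _ _ mo_in mo0_in.
rewrite (@bigmax_seq_const _ _ _ (vpart mo0)) // => mo mo_in.
by have [_ ->] := H_bihomog _ _ mo_in mo0_in.
Qed.

Lemma degg_eq0 (n m : nat) (H : {mpoly K[n + m]}) :
  {in msupp H, forall mo, gpart mo = 0%N} -> degg H = 0%N.
Proof. by move=> H_V; rewrite /degg big1_seq // => mo /andP[_ /H_V]. Qed.

End Degrees.

Lemma sum_ord_zero_tail (l r : nat) (f : nat -> nat) :
  (l <= r)%N -> (forall j, (l <= j < r)%N -> f j = 0%N) ->
  (\sum_(i < r) f i = \sum_(i < l) f i)%N.
Proof.
move=> l_le_r f_tail.
rewrite -!(big_mkord xpredT) (big_cat_nat (leq0n l) l_le_r) /=.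
rewrite [X in (_ + X)%N]big_nat_cond [X in (_ + X)%N]big1 ?addn0 //.
by move=> j /andP[/f_tail].
Qed.

Theorem lemma2p4 (R : realType) (n m : nat)
  (c : 'I_n -> 'I_n -> 'rV[complex R]_n) (A : 'I_n -> 'M[complex R]_m)
  (Hlie : is_lie (gbr c)) (Hrep : is_rep c A) (Hred : reductive c)
  (Hfaith : no_trivial_ideal c A)
  (r : nat) (H : nat -> {mpoly (complex R)[n + m]})
  (Hinv : forall i, (i < r)%N -> lie_invariant (qbr c A) (H i))
  (Hbih : forall i, (i < r)%N -> bihomog (H i))
  (Hgen : generic (fun x : 'rV[complex R]_m =>
      let l := ind_sub (gbr c) (gx A x) in
      [/\ (l <= r)%N,
          freely_generate c A x [tuple phi x (H i) | i < l],
          (forall j, (l <= j < r)%N -> in_CVstar_inv c A (H j)) &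
          (\sum_(i < l) degg (H i))%N = bb_sub (gbr c) (gx A x)])) :
  (\sum_(i < r) totdeg (H i))%N = bb (qbr c A) <->
  (\sum_(i < r) degV (H i))%N = m.
Proof.
case: Hgen => p [p0 p_generic].
have [g [g_regular pg]] := exists_regular_nonroot (qbr c A) p0.
rewrite -[g]hsubmxK in g_regular.
have [l_le_r _ tail_CV degg_sum] := p_generic _ pg.
have degg_tail j :
    (ind_sub (gbr c) (gx A (rsubmx g)) <= j < r)%N -> degg (H j) = 0%N.
  by move=> /tail_CV[tail_V _]; apply: degg_eq0.
have totdeg_split : (\sum_(i < r) totdeg (H i) =
    \sum_(i < r) degg (H i) + \sum_(i < r) degV (H i))%N.
  by rewrite -big_split; apply: eq_bigr => i _; apply/totdeg_bihomog/Hbih.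
rewrite totdeg_split (bb_qbr_rais g_regular) (sum_ord_zero_tail l_le_r degg_tail).
by rewrite degg_sum addnC; split => [/addIn | ->].
Qed.
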